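(* Assume $\ell(y,x,\theta)\ge0$ for all $\theta$ and $\nu$-a.e. $(x,y)$, $L(\theta)<\infty$ for all $\theta$, and let $\pi$ be a prior on $\Theta$. Suppose $\lambda^\star>0$ is a local (or global) minimizer of $\lambda\mapsto\mathrm{EB}_0(\pi_J^\lambda,\lambda)$ on $(0,\infty)$, that this function is differentiable at $\lambda^\star$, and that its derivative may be computed by differentiating under the expectations $\mathbb{E}_{D\sim\nu^n}$, $\mathbb{E}_\pi$ and $\mathbb{E}_\nu$ (with all quantities below finite). Then, with $\rho^\star=\rho^\star_{\lambda^\star}$, $$\mathbb{E}_{D\sim\nu^n}\big[\mathcal{B}(\rho^\star(\cdot\mid D),\lambda^\star)\big]=\frac{1}{n}\mathbb{E}_{D\sim\nu^n}\big[\mathrm{KL}(\rho^\star(\cdot\mid D)\,\|\,\pi)\big].$$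
   Context: Let $\nu$ be a probability distribution on pairs $(x,y)$, $\Theta$ a parameter space, and for each $\theta\in\Theta$ let $p(y\mid x,\theta)>0$ be a conditional density; loss $\ell(y,x,\theta)=-\ln p(y\mid x,\theta)$, expected loss $L(\theta)=\mathbb{E}_\nu[\ell(y,x,\theta)]$. A sample $D=\{(x_i,y_i)\}_{i=1}^n\sim\nu^n$ is i.i.d.; $p(D\mid\theta)=\prod_{i=1}^n p(y_i\mid x_i,\theta)$. The cumulant generating function is $J_\theta(\lambda)=\ln\mathbb{E}_\nu[e^{\lambda(L(\theta)-\ell(y,x,\theta))}]$ with derivative $J_\theta'$. For a prior $\pi$ and $\lambda>0$: - Jensen prior: $\pi_J^\lambda(\theta)=\pi(\theta)e^{-nJ_\theta(\lambda)}/\mathbb{E}_\pi[e^{-nJ_\theta(\lambda)}]$; - posterior: $\rho^\star_\lambda(\theta\mid D)=p(D\mid\theta)^\lambda\pi_J^\lambda(\theta)/\mathbb{E}_{\pi_J^\lambda}[p(D\mid\theta)^\lambda]$; - $R_\lambda(\pi)=\ln\mathbb{E}_\pi[e^{nJ_\theta(\lambda)}]$; - $\mathrm{EB}_0(\pi,\lambda)=\frac{1}{\lambda n}\mathbb{E}_{D\sim\nu^n}\big[-\ln\mathbb{E}_\pi[p(D\mid\theta)^\lambda]\big]+\frac{1}{\lambda n}R_\lambda(\pi)$; - for a distribution $\rho$ on $\Theta$: $\mathcal{B}(\rho,\lambda)=\mathbb{E}_\rho\big[\lambda J_\theta'(\lambda)-J_\theta(\lambda)\big]$. *)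

From HB Require Import structures.
From mathcomp Require Import all_boot all_order all_algebra.
From mathcomp Require Import all_classical all_reals all_analysis.
Set Implicit Arguments. Unset Strict Implicit. Unset Printing Implicit Defensive.
Import Order.TTheory GRing.Theory Num.Theory.
Local Open Scope ring_scope.
Local Open Scope classical_set_scope.

(* A sample of size n lives in  T * (T * (... * (T * unit)))  (n copies).    *)
Section iid_sample.
Context {d : measure_display} (T : measurableType d) (R : realType).

Fixpoint sampleT (n : nat) : {dd : measure_display & measurableType dd} :=
  match n with
  | 0 => existT (fun dd => measurableType dd) default_measure_display
                (unit : measurableType _)
  | k.+1 => existT (fun dd => measurableType dd) _
                ((T * projT2 (sampleT k))%type : measurableType _)
  end.

Definition sample (n : nat) := projT2 (sampleT n).

Fixpoint pow_prob (nu : probability T R) (n : nat) : probability (sample n) R :=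
  match n return probability (sample n) R with
  | 0 => [the probability _ _ of dirac tt]
  | k.+1 => [the probability _ _ of (nu \x^ pow_prob nu k)%E]
  end.

Fixpoint sample_prod (f : T -> R) (n : nat) : sample n -> R :=
  match n return sample n -> R with
  | 0 => fun _ => 1
  | k.+1 => fun D => f D.1 * sample_prod f D.2
  end.
End iid_sample.

(* Distributions on Theta other than the prior pi (Jensen prior, posterior)  *)
(* are represented by their density w.r.t. pi, exactly as they are defined.  *)
Section pac_bayes.
Context {dX dY dT : measure_display} (X : measurableType dX)
  (Y : measurableType dY) (Theta : measurableType dT) (R : realType).
Variables (nu : probability (X * Y)%type R) (pi : probability Theta R).
(* p y x th  =  p(y | x, theta) *)
Variable p : Y -> X -> Theta -> R.
Variable n : nat.

Definition loss (z : X * Y) (th : Theta) : R := - ln (p z.2 z.1 th).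

Definition Lexp (th : Theta) : \bar R := (\int[nu]_z (loss z th)%:E)%E.
Definition Lval (th : Theta) : R := fine (Lexp th).

Definition Jcgf (th : Theta) (l : R) : R :=
  ln (Rintegral nu setT (fun z => expR (l * (Lval th - loss z th)))).
Definition Jcgf' (th : Theta) (l : R) : R := derive1 (Jcgf th) l.

Definition lik (D : sample (X * Y)%type n) (th : Theta) : R :=
  sample_prod (fun z => p z.2 z.1 th) D.

Definition Epi (f : Theta -> R) : R := Rintegral pi setT f.

Definition Edens (g : Theta -> R) (f : Theta -> R) : R :=
  Epi (fun th => g th * f th).

Definition ED (F : sample (X * Y)%type n -> R) : R :=
  Rintegral (pow_prob nu n) setT F.

Definition jensen_dens (l : R) (th : Theta) : R :=
  expR (- (n%:R * Jcgf th l)) / Epi (fun th' => expR (- (n%:R * Jcgf th' l))).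

Definition Rlam (g : Theta -> R) (l : R) : R :=
  ln (Edens g (fun th => expR (n%:R * Jcgf th l))).

Definition EB0 (g : Theta -> R) (l : R) : R :=
  (l * n%:R)^-1 * ED (fun D => - ln (Edens g (fun th => lik D th `^ l)))
  + (l * n%:R)^-1 * Rlam g l.

Definition EBJ (l : R) : R := EB0 (jensen_dens l) l.

Definition post_dens (l : R) (D : sample (X * Y)%type n) (th : Theta) : R :=
  lik D th `^ l * jensen_dens l th
  / Edens (jensen_dens l) (fun th' => lik D th' `^ l).

Definition Bfun (g : Theta -> R) (l : R) : R :=
  Edens g (fun th => l * Jcgf' th l - Jcgf th l).

Definition KLdens (g : Theta -> R) : R := Edens g (fun th => ln (g th)).

End pac_bayes.

(* Write Z(l) = E_pi[exp(-n J_theta(l))] for the normaliser of the Jensen prior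
   and M_D(l) = E_pi[p(D|theta)^l exp(-n J_theta(l))]. Then
   EB_0(pi_J^l, l) = (l n)^-1 (F(l) - ln Z(l)) with F(l) = E_D[ln Z(l) - ln M_D(l)],
   so at the interior minimiser lam the first-order condition reads
   F(lam) - ln Z(lam) = lam (F'(lam) - Z'/Z).
   The posterior density w.r.t. pi is p(D|theta)^lam exp(-n J_theta(lam)) / M_D(lam),
   so its logarithm is explicit and, for each sample D,
   n B(rho, lam) - KL(rho || pi) = ln M_D - lam M_D'/M_D
                                = lam F_D' - F_D + ln Z - lam Z'/Z,
   with F_D = ln Z - ln M_D. Taking E_D and using the first-order condition, the
   right-hand side vanishes. *)

From mathcomp Require Import all_boot all_order all_algebra.
From mathcomp Require Import all_classical all_reals all_analysis.
From mathcomp Require Import ring measurable_realfun.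
Import Order.TTheory GRing.Theory Num.Theory.
Import numFieldNormedType.Exports.
Local Open Scope ring_scope.
Local Open Scope classical_set_scope.
Set Implicit Arguments.
Unset Strict Implicit.
Unset Printing Implicit Defensive.

Lemma sample_prod_gt0 d (T : measurableType d) (R : realType) (f : T -> R) k
    (D : sample T k) :
  (forall z, 0 < f z) -> 0 < sample_prod f D.
Proof. by move=> f_gt0; elim: k D => [|k IH] D /=; rewrite ?mulr_gt0. Qed.

Lemma measurable_sample_prod d (T : measurableType d) dT (Theta : measurableType dT)
    (R : realType) (f : T * Theta -> R) k (D : sample T k) :
  measurable_fun setT f ->
  measurable_fun setT (fun th => sample_prod (fun z => f (z, th)) D).
Proof.
move=> mf; elim: k D => [|k IH] D /=; first exact: measurable_cst.
by apply: measurable_funM => //; exact: measurable_fun_pair2.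
Qed.

Section real_calculus.
Context {R : realType}.
Implicit Types (f g : R -> R) (x c e : R).

(* Unlike [derive1_at_min], only derivability at [c] is assumed. *)
Lemma derive1_local_min f c e : 0 < e -> derivable f c 1 ->
  (forall t, `|t - c| < e -> f c <= f t) -> 'D_1 f c = 0.
Proof.
move=> e0 df cmin.
have near_c h : `|h| < e -> 0 <= f (h + c) - f c.
  by move=> he; rewrite subr_ge0 cmin // addrK.
apply/eqP; rewrite eq_le; apply/andP; split.
- have := closed_cvg _ (@closed_le _ 0) _ _ (cvg_dnbhs_at_left df); apply.
  near=> h.
  have h_lt0 : h < 0 by near: h; exact: nbhs_left_lt.
  have h_gtNe : - e < h by near: h; apply: nbhs_left_gt; rewrite ltrNl oppr0.
  rewrite /= [_%:A]mulr1 nmulr_rle0 ?invr_lt0 // near_c //.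
  by rewrite ltr0_norm // ltrNl.
- have := closed_cvg _ (@closed_ge _ 0) _ _ (cvg_dnbhs_at_right df); apply.
  near=> h.
  have h_gt0 : 0 < h by near: h; exact: nbhs_right_gt.
  have h_lte : h < e by near: h; exact: nbhs_right_lt.
  rewrite /= [_%:A]mulr1 mulr_ge0 ?invr_ge0 ?(ltW h_gt0) // near_c //.
  by rewrite gtr0_norm.
Unshelve. all: by end_near. Qed.

Lemma is_derive_ln f x df : 0 < f x -> is_derive x 1 f df ->
  is_derive x 1 (fun l => ln (f l)) (df / f x).
Proof.
move=> fx0 dfx; apply: is_derive_eq (is_derive1_comp (is_derive1_ln fx0) dfx) _.
exact: mulrC.
Qed.

Lemma is_derive_lnV f x df : 0 < f x -> is_derive x 1 f df ->
  is_derive x 1 (fun l => ln (f l)^-1) (- (df / f x)).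
Proof.
move=> fx0 dfx; have fxN0 : f x != 0 by rewrite gt_eqF.
have fVx_gt0 : 0 < (f x)^-1 by rewrite invr_gt0.
apply: is_derive_eq (@is_derive_ln (fun l => (f l)^-1) x _ fVx_gt0
  (is_deriveV fxN0 dfx)) _.
by rewrite /GRing.scale /=; field.
Qed.

Lemma is_derive_lnVM f g x df dg : 0 < f x -> 0 < g x ->
  is_derive x 1 f df -> is_derive x 1 g dg ->
  is_derive x 1 (fun l => ln ((f l)^-1 * g l)) (dg / g x - df / f x).
Proof.
move=> fx0 gx0 dfx dgx; have fxN0 : f x != 0 by rewrite gt_eqF.
have gxN0 : g x != 0 by rewrite gt_eqF.
have fVg_gt0 : 0 < (f x)^-1 * g x by rewrite mulr_gt0 ?invr_gt0.
have dfVg : is_derive x 1 (fun l => (f l)^-1 * g l) _ :=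
  is_deriveM (is_deriveV fxN0 dfx) dgx.
apply: is_derive_eq (@is_derive_ln (fun l => (f l)^-1 * g l) x _ fVg_gt0 dfVg) _.
by rewrite /GRing.scale /=; field; apply/andP.
Qed.

Lemma derive1_scaled_eq0 g (k x dg : R) :
  x != 0 -> k != 0 -> is_derive x 1 g dg ->
  'D_1 (fun l : R => (l * k)^-1 * g l) x = 0 -> g x = x * dg.
Proof.
move=> xN0 kN0 dgx.
have dlk : is_derive x 1 (fun l : R => l * k) k.
  by apply: is_derive_eq (is_deriveM (is_derive_id x 1) (is_derive_cst k x 1)) _;
    rewrite /GRing.scale /= mulr0 mulr1 add0r.
have xkN0 : x * k != 0 by rewrite mulf_neq0.
have dh : is_derive x 1 (fun l => (l * k)^-1 * g l) _ :=
  is_deriveM (is_deriveV (f := fun l => l * k) xkN0 dlk) dgx.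
rewrite derive_val /GRing.scale /=.
move=> /(congr1 (fun t => t * x ^+ 2 * k)); rewrite !mul0r => E0.
by apply/eqP; rewrite eq_sym -subr_eq0 -E0; apply/eqP; field; apply/andP.
Qed.
End real_calculus.

Lemma ge0_RintegralZl d (T : measurableType d) (R : realType)
    (mu : {measure set T -> \bar R}) D (f : T -> R) (c : R) : measurable D -> measurable_fun D f ->
  (forall x, D x -> 0 <= f x) -> 0 <= c ->
  \int[mu]_(x in D) (c * f x) = c * \int[mu]_(x in D) f x.
Proof.
move=> mD mf f0 c0; rewrite /Rintegral.
under eq_integral do rewrite EFinM.
rewrite ge0_integralZl_EFin//; last exact/measurable_EFinP.
have : (0 <= \int[mu]_(x in D) (f x)%:E)%E.
  by apply: integral_ge0 => x Dx; rewrite lee_fin f0.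
case: (\int[mu]_(x in D) _)%E => [r _||] //=; rewrite ?mulr0 //.
move: c0; rewrite le_eqVlt => /predU1P[<-|c_gt0]; first by rewrite mul0e.
by rewrite gt0_muley ?lte_fin.
Qed.

Lemma Rintegral_gt0 d (T : measurableType d) (R : realType) (P : probability T R)
    (f : T -> R) :
  P.-integrable setT (EFin \o f) -> (forall x, 0 < f x) ->
  0 < \int[P]_(x in setT) f x.
Proof.
move=> intf f_gt0.
rewrite lt_neqAle Rintegral_ge0 ?andbT; last by move=> x _; exact/ltW.
apply/negP => /eqP I0.
have mf : measurable_fun setT (EFin \o f) by case/integrableP: intf.
have absf0 : (\int[P]_(x in setT) `|(EFin \o f) x| = 0)%E.
  rewrite (eq_integral (EFin \o f)); last by move=> x _; rewrite /= gtr0_norm.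
  by rewrite -(fineK (integrable_fin_num measurableT intf)) -/(Rintegral _ _ _) -I0.
have [N [mN PN0 fN0]] := (ae_eq_integral_abs P measurableT mf).1 absf0.
suff : (P setT <= P N)%E by rewrite PN0 probability_setT lee_fin ler10.
apply: le_measure; rewrite ?inE //.
by move=> x _; apply: fN0 => /(_ I) /= /eqP; rewrite eqe gt_eqF.
Qed.

Lemma Rintegral_ae_affine d (T : measurableType d) (R : realType)
    (P : probability T R) (f1 f2 g1 g2 : T -> R) (a b k : R) :
  P.-integrable setT (EFin \o f1) -> P.-integrable setT (EFin \o f2) ->
  P.-integrable setT (EFin \o g1) -> P.-integrable setT (EFin \o g2) ->
  {ae P, forall x, a * f1 x - f2 x = b * g1 x - g2 x + k} ->
  a * \int[P]_(x in setT) f1 x - \int[P]_(x in setT) f2 x =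
  b * \int[P]_(x in setT) g1 x - \int[P]_(x in setT) g2 x + k.
Proof.
move=> if1 if2 ig1 ig2 fg.
have iaf1 := integrableZl measurableT a if1.
have ibg1 := integrableZl measurableT b ig1.
have ik := finite_measure_integrable_cst P k measurableT.
have if12 := integrableB measurableT iaf1 if2.
have ig12 := integrableB measurableT ibg1 ig2.
have igk := integrableD measurableT ig12 ik.
have E : \int[P]_(x in setT) (a * f1 x - f2 x) =
         \int[P]_(x in setT) (b * g1 x - g2 x + k).
  congr fine; apply: ae_eq_integral => //; [exact: measurable_int if12|
    exact: measurable_int igk|].
  by apply: filterS fg => x /= -> _.
rewrite RintegralB ?RintegralZl // in E.
rewrite E RintegralD ?RintegralB ?RintegralZl //.
have P1 : fine (P [set: T]) = 1 by rewrite probability_setT.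
by rewrite Rintegral_cst // P1 mulr1.
Qed.

Section pac_bayes_identities.
Context {dX dY dT : measure_display} (X : measurableType dX)
  (Y : measurableType dY) (Theta : measurableType dT) (R : realType).
Variables (nu : probability (X * Y)%type R) (pi : probability Theta R).
Variables (p : Y -> X -> Theta -> R) (n : nat).
Local Notation sampleXY := (sample (X * Y)%type n).
Local Notation jensen_weight l th := (expR (- (n%:R * Jcgf nu p th l))).

Definition jensen_norm (l : R) : R := Epi pi (fun th => jensen_weight l th).

Definition post_norm (D : sampleXY) (l : R) : R :=
  Epi pi (fun th => lik p D th `^ l * jensen_weight l th).

Definition neg_log_evidence (D : sampleXY) (l : R) : R :=
  - ln (Edens pi (jensen_dens nu pi p n l) (fun th => lik p D th `^ l)).

Lemma Rlam_jensen l :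
  Rlam nu pi p n (jensen_dens nu pi p n l) l = ln (jensen_norm l)^-1.
Proof.
rewrite /Rlam /Edens /jensen_dens; congr ln.
transitivity (Epi pi (fun _ => (jensen_norm l)^-1)).
  by apply: eq_Rintegral => th _; rewrite expRN mulrAC mulVf ?mul1r ?gt_eqF ?expR_gt0.
have pi1 : fine (pi [set: Theta]) = 1 by rewrite probability_setT.
by rewrite /Epi Rintegral_cst // pi1 mulr1.
Qed.

Lemma EBJE l : EBJ nu pi p n l =
  (l * n%:R)^-1 * (ED nu (neg_log_evidence^~ l) + ln (jensen_norm l)^-1).
Proof. by rewrite /EBJ /EB0 Rlam_jensen mulrDr. Qed.

Lemma EBJ_local_min_identity lam dZ dF : (0 < n)%N -> 0 < lam ->
  0 < jensen_norm lam ->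
  (exists2 e : R, 0 < e & forall l, 0 < l -> `|l - lam| < e ->
     EBJ nu pi p n lam <= EBJ nu pi p n l) ->
  derivable (EBJ nu pi p n) lam 1 ->
  is_derive lam 1 jensen_norm dZ ->
  is_derive lam 1 (fun l => ED nu (neg_log_evidence^~ l)) dF ->
  ED nu (neg_log_evidence^~ lam) - ln (jensen_norm lam) =
  lam * (dF - dZ / jensen_norm lam).
Proof.
move=> n_gt0 lam_gt0 Z_gt0 [e e_gt0 lam_min] dEBJ dZl dFl.
have : 'D_1 (EBJ nu pi p n) lam = 0.
  apply: (derive1_local_min (e := Num.min e lam) _ dEBJ).
    by rewrite lt_min e_gt0.
  move=> t; rewrite lt_min => /andP[te /ltr_normlP[tl _]].
  by apply: lam_min te; move: tl; rewrite opprB ltrBlDr ltrDl.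
have dG : is_derive lam 1
    (fun l => ED nu (neg_log_evidence^~ l) + ln (jensen_norm l)^-1) _ :=
  is_deriveD dFl (is_derive_lnV Z_gt0 dZl).
have n_neq0 : n%:R != 0 :> R by rewrite pnatr_eq0 -lt0n.
rewrite (funext EBJE) => /(derive1_scaled_eq0 (lt0r_neq0 lam_gt0) n_neq0 dG).
by rewrite lnV ?posrE // => ->.
Qed.

Hypothesis p_gt0 : forall y x th, 0 < p y x th.
Hypothesis measurable_p :
  measurable_fun setT (fun zt : (X * Y) * Theta => p zt.1.2 zt.1.1 zt.2).
Hypothesis measurable_Jcgf :
  forall l, 0 < l -> measurable_fun setT (fun th => Jcgf nu p th l).

Lemma lik_gt0 (D : sampleXY) th : 0 < lik p D th.
Proof. by apply: sample_prod_gt0 => z; exact: p_gt0. Qed.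

Lemma measurable_lik (D : sampleXY) : measurable_fun setT (lik p D).
Proof.
exact: (@measurable_sample_prod _ _ _ _ _
  (fun zt : (X * Y) * Theta => p zt.1.2 zt.1.1 zt.2) n D measurable_p).
Qed.

Lemma Edens_jensen_lik D l : 0 < l ->
  Edens pi (jensen_dens nu pi p n l) (fun th => lik p D th `^ l) =
  (jensen_norm l)^-1 * post_norm D l.
Proof.
move=> l_gt0; rewrite /Edens /post_norm /Epi -ge0_RintegralZl //.
- by apply: eq_Rintegral => th _; rewrite /jensen_dens; ring.
- apply: measurable_funM.
    exact: measurableT_comp (measurable_powR _) (measurable_lik D).
  apply: measurableT_comp => //; apply: measurable_funN.
  by apply: measurable_funM; [exact: measurable_cst|exact: measurable_Jcgf].
- by move=> th _; rewrite mulr_ge0 ?powR_ge0 ?expR_ge0.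
- by rewrite invr_ge0 Rintegral_ge0 // => th _; rewrite expR_ge0.
Qed.

Section posterior.
Variables (D : sampleXY) (l : R).
Hypotheses (l_gt0 : 0 < l) (Z_gt0 : 0 < jensen_norm l) (M_gt0 : 0 < post_norm D l).

Lemma neg_log_evidenceE :
  neg_log_evidence D l = ln (jensen_norm l) - ln (post_norm D l).
Proof.
rewrite /neg_log_evidence Edens_jensen_lik // lnM ?posrE ?invr_gt0 //.
by rewrite lnV ?posrE // opprD opprK.
Qed.

Lemma is_derive_neg_log_evidence dZ dM :
  is_derive l 1 jensen_norm dZ -> is_derive l 1 (post_norm D) dM ->
  is_derive l 1 (neg_log_evidence D) (dZ / jensen_norm l - dM / post_norm D l).
Proof.
move=> dZl dMl.
have dlnZM := is_deriveN (is_derive_lnVM Z_gt0 M_gt0 dZl dMl).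
apply: is_derive_eq (near_eq_is_derive _ dlnZM) _; last by rewrite opprB.
near=> t; rewrite /neg_log_evidence Edens_jensen_lik //.
by near: t; exact: lt_nbhsr.
Unshelve. all: by end_near. Qed.

Lemma post_densE : post_dens nu pi p l D =
  (fun th => (post_norm D l)^-1 * (lik p D th `^ l * jensen_weight l th)).
Proof.
apply/funext => th; rewrite /post_dens Edens_jensen_lik // /jensen_dens -/(jensen_norm l).
by field; rewrite !gt_eqF.
Qed.

Lemma Bfun_KLdens_post_dens dZ :
  let w th := lik p D th `^ l * jensen_weight l th in
  let dw th :=
    (ln (lik p D th) - n%:R * Jcgf' nu p th l) * lik p D th `^ l * jensen_weight l th in
  let rho := post_dens nu pi p l D in
  is_derive l 1 jensen_norm dZ -> is_derive l 1 (post_norm D) (Epi pi dw) ->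
  pi.-integrable setT (EFin \o w) -> pi.-integrable setT (EFin \o dw) ->
  pi.-integrable setT (fun th => (rho th * (l * Jcgf' nu p th l - Jcgf nu p th l))%:E) ->
  pi.-integrable setT (fun th => (rho th * ln (rho th))%:E) ->
  n%:R * Bfun nu pi p rho l - KLdens pi rho =
  l * derive1 (neg_log_evidence D) l - neg_log_evidence D l
    + (ln (jensen_norm l) - l * (dZ / jensen_norm l)).
Proof.
move=> w dw rho dZl dMl Iw Idw IB IKL.
have w_gt0 th : 0 < w th by rewrite mulr_gt0 ?powR_gt0 ?lik_gt0 ?expR_gt0.
have ln_rho th : ln (rho th) =
    - ln (post_norm D l) + (l * ln (lik p D th) - n%:R * Jcgf nu p th l).
  rewrite /rho post_densE -/(w th) lnM ?posrE ?invr_gt0 ?w_gt0 // lnV ?posrE //.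
  by rewrite lnM ?posrE ?powR_gt0 ?lik_gt0 ?expR_gt0 // ln_powR expRK.
have -> : n%:R * Bfun nu pi p rho l - KLdens pi rho =
    ln (post_norm D l) - l * Epi pi dw / post_norm D l.
  rewrite /Bfun /KLdens /Edens /Epi -RintegralZl // -RintegralB //;
    last exact: (integrableZl measurableT _ IB).
  transitivity (\int[pi]_(th in setT)
      ((- l / post_norm D l) * dw th + (ln (post_norm D l) / post_norm D l) * w th)).
    apply: eq_Rintegral => th _; rewrite ln_rho /rho post_densE /dw /w.
    by field; rewrite gt_eqF.
  rewrite RintegralD ?RintegralZl //; last 2 first.
  - exact: (integrableZl measurableT _ Idw).
  - exact: (integrableZl measurableT _ Iw).
  have -> : \int[pi]_(th in setT) w th = post_norm D l by [].
  by rewrite /Epi; field; rewrite gt_eqF.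
have dN := is_derive_neg_log_evidence dZl dMl.
by rewrite neg_log_evidenceE derive1E derive_val; ring.
Qed.
End posterior.
End pac_bayes_identities.

Unset Implicit Arguments.

Theorem mainTheorem9
  (dX dY dT : measure_display) (X : measurableType dX) (Y : measurableType dY)
  (Theta : measurableType dT) (R : realType)
  (nu : probability (X * Y)%type R) (muY : {measure set Y -> \bar R})
  (pi : probability Theta R) (p : Y -> X -> Theta -> R) (n : nat) (lam : R) :
  (* standing assumptions: n >= 1 samples; p(y|x,theta) > 0 is a
     conditional density (w.r.t. a base measure muY on Y), jointly measurable *)
  (0 < n)%N ->
  (forall y x th, 0 < p y x th) ->
  measurable_fun setT (fun zt : (X * Y) * Theta => p zt.1.2 zt.1.1 zt.2) ->
  (forall x th, (\int[muY]_y (p y x th)%:E = 1)%E) ->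
  (* theta |-> J_theta(lambda) is measurable (needed for pi_J^lambda to be defined) *)
  (forall l, 0 < l -> measurable_fun setT (fun th => Jcgf nu p th l)) ->
  (* l >= 0 nu-a.e., L(theta) < oo *)
  (forall th, {ae nu, forall z, 0 <= loss p z th}) ->
  (forall th, (Lexp nu p th < +oo)%E) ->
  (* lam is a local (or global) minimizer on (0,oo) of lambda |-> EB_0(pi_J^lambda, lambda) *)
  0 < lam ->
  (exists2 e : R, 0 < e &
     forall l, 0 < l -> `|l - lam| < e -> EBJ nu pi p n lam <= EBJ nu pi p n l) ->
  (* ... at which it is differentiable *)
  derivable (EBJ nu pi p n) lam 1 ->
  (* finiteness of all quantities involved (at lam) *)
  (forall th,
     nu.-integrable setT
       (fun z => (expR (lam * (Lval nu p th - loss p z th)))%:E) /\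
     nu.-integrable setT
       (fun z => ((Lval nu p th - loss p z th)
                  * expR (lam * (Lval nu p th - loss p z th)))%:E)) ->
  pi.-integrable setT (fun th => (expR (- (n%:R * Jcgf nu p th lam)))%:E) ->
  pi.-integrable setT
    (fun th => (Jcgf' nu p th lam * expR (- (n%:R * Jcgf nu p th lam)))%:E) ->
  {ae pow_prob nu n, forall D : sample (X * Y)%type n,
     pi.-integrable setT
       (fun th => (lik p D th `^ lam * expR (- (n%:R * Jcgf nu p th lam)))%:E) /\
     pi.-integrable setT
       (fun th => ((ln (lik p D th) - n%:R * Jcgf' nu p th lam)
                   * lik p D th `^ lam * expR (- (n%:R * Jcgf nu p th lam)))%:E) /\
     pi.-integrable setT
       (fun th => (post_dens nu pi p lam D th
                   * (lam * Jcgf' nu p th lam - Jcgf nu p th lam))%:E) /\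
     pi.-integrable setT
       (fun th => (post_dens nu pi p lam D th
                   * ln (post_dens nu pi p lam D th))%:E)} ->
  (pow_prob nu n).-integrable setT
    (fun (D : sample (X * Y)%type n) => (Bfun nu pi p (post_dens nu pi p lam D) lam)%:E) ->
  (pow_prob nu n).-integrable setT
    (fun (D : sample (X * Y)%type n) => (KLdens pi (post_dens nu pi p lam D))%:E) ->
  (pow_prob nu n).-integrable setT
    (fun (D : sample (X * Y)%type n) => (- ln (Edens pi (jensen_dens nu pi p n lam)
                       (fun th => lik p D th `^ lam)))%:E) ->
  (pow_prob nu n).-integrable setT
    (fun (D : sample (X * Y)%type n) => (derive1 (fun l => - ln (Edens pi (jensen_dens nu pi p n l)
                                         (fun th => lik p D th `^ l))) lam)%:E) ->
  (* the derivative may be computed by differentiating under E_nu ... *)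
  (forall th,
     is_derive lam 1
       (fun l => Rintegral nu setT (fun z => expR (l * (Lval nu p th - loss p z th))))
       (Rintegral nu setT (fun z => (Lval nu p th - loss p z th)
                             * expR (lam * (Lval nu p th - loss p z th))))) ->
  (* ... under E_pi ... *)
  is_derive lam 1
    (fun l => Epi pi (fun th => expR (- (n%:R * Jcgf nu p th l))))
    (Epi pi (fun th => - (n%:R * Jcgf' nu p th lam)
                       * expR (- (n%:R * Jcgf nu p th lam)))) ->
  {ae pow_prob nu n, forall D : sample (X * Y)%type n,
     is_derive lam 1
       (fun l => Epi pi (fun th => lik p D th `^ l * expR (- (n%:R * Jcgf nu p th l))))
       (Epi pi (fun th => (ln (lik p D th) - n%:R * Jcgf' nu p th lam)
                          * lik p D th `^ lam * expR (- (n%:R * Jcgf nu p th lam))))} ->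
  (* ... and under E_{D ~ nu^n} *)
  is_derive lam 1
    (fun l => ED nu (fun (D : sample (X * Y)%type n) => - ln (Edens pi (jensen_dens nu pi p n l)
                                      (fun th => lik p D th `^ l))))
    (ED nu (fun (D : sample (X * Y)%type n) => derive1 (fun l => - ln (Edens pi (jensen_dens nu pi p n l)
                                                  (fun th => lik p D th `^ l))) lam)) ->
  (* conclusion, with rho* = rho*_lam given by its density w.r.t. pi *)
  ED nu (fun (D : sample (X * Y)%type n) => Bfun nu pi p (post_dens nu pi p lam D) lam)
  = n%:R^-1 * ED nu (fun (D : sample (X * Y)%type n) => KLdens pi (post_dens nu pi p lam D)).
Proof.
move=> n_gt0 p_gt0 mp _ mJ _ _ lam_gt0 lam_min dEBJ _ IZ _ Iae IB IKL Iu Iv _ dZ dMae dF.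
have Z_gt0 : 0 < jensen_norm nu pi p n lam.
  by apply: Rintegral_gt0 IZ _ => th; exact: expR_gt0.
have crit := EBJ_local_min_identity n_gt0 lam_gt0 Z_gt0 lam_min dEBJ dZ dF.
set Z := jensen_norm nu pi p n lam in Z_gt0 crit.
set dZ' := Epi pi _ in dZ crit.
have hae : {ae pow_prob nu n, forall D : sample (X * Y)%type n,
    n%:R * Bfun nu pi p (post_dens nu pi p lam D) lam
      - KLdens pi (post_dens nu pi p lam D) =
    lam * derive1 (neg_log_evidence nu pi p D) lam - neg_log_evidence nu pi p D lam
      + (ln Z - lam * (dZ' / Z))}.
  apply: filterS2 Iae dMae => D [Iw [Idw [IBD IKLD]]] dM.
  have M_gt0 : 0 < post_norm nu pi p D lam.
    by apply: Rintegral_gt0 Iw _ => th; rewrite mulr_gt0 ?powR_gt0 ?expR_gt0 ?lik_gt0.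
  exact: (Bfun_KLdens_post_dens p_gt0 mp mJ lam_gt0 Z_gt0 M_gt0 dZ).
have := Rintegral_ae_affine IB IKL Iv Iu hae.
rewrite /ED /neg_log_evidence in crit *.
set Eu := Rintegral _ _ (fun D => - ln _) in crit *.
set Ev := Rintegral _ _ (fun D => derive1 _ _) in crit *.
set EB := Rintegral _ _ (fun D => Bfun _ _ _ _ _).
set EKL := Rintegral _ _ (fun D => KLdens _ _).
move=> EB_KL; have n_neq0 : n%:R != 0 :> R by rewrite pnatr_eq0 -lt0n.
suff /subr0_eq <- : n%:R * EB - EKL = 0 by rewrite mulKf.
by rewrite EB_KL -[Eu](subrK (ln Z)) crit; ring.
Qed.
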